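(* Let $n\ge 1$ and let $\alpha,\beta,\gamma,\alpha_i,\beta_i,\gamma_i\in\widehat{\mathbb{F}_q^\times}$ ($1\le i\le n$). (i) For all $\lambda_1,\dots,\lambda_n\in\mathbb{F}_q$, $$-g(\alpha)\,F_A^{(n)}\!\left({\alpha;\beta_1,\dots,\beta_n\atop \gamma_1,\dots,\gamma_n};\lambda_1,\dots,\lambda_n\right)=\sum_{t\in\mathbb{F}_q^\times}\psi(t)\alpha(t)\prod_{i=1}^n {}_1F_1\!\left({\beta_i\atop\gamma_i};\lambda_i t\right).$$ (ii) For all $\lambda_1,\dots,\lambda_n\in\mathbb{F}_q$, $$-\frac{q}{g^\circ(\gamma)}\,F_B^{(n)}\!\left({\alpha_1,\dots,\alpha_n;\beta_1,\dots,\beta_n\atop \gamma};\lambda_1,\dots,\lambda_n\right)=\sum_{t\in\mathbb{F}_q^\times}\psi(-t)\overline{\gamma}(t)\prod_{i=1}^n {}_2F_0\!\left({\alpha_i,\beta_i\atop -};\frac{\lambda_i}{t}\right).$$ (iii) Suppose $p\neq 2$. For all $\lambda_1,\dots,\lambda_n\in\mathbb{F}_q$, $$-g(\alpha^2)\,F_C^{(n)}\!\left({\alpha;\alpha\phi\atop \beta_1,\dots,\beta_n};\lambda_1,\dots,\lambda_n\right)=\sum_{t\in\mathbb{F}_q^\times}\psi(t)\alpha^2(t)\prod_{i=1}^n {}_0F_1\!\left({-\atop\beta_i};\frac{\lambda_i t^2}{4}\right).$$ (iv) For all $\lambda_1,\dots,\lambda_n\in\mathbb{F}_q$, $$g(\alpha)g(\beta)\,F_C^{(n)}\!\left({\alpha;\beta\atop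 \gamma_1,\dots,\gamma_n};\lambda_1,\dots,\lambda_n\right)=\sum_{s,t\in\mathbb{F}_q^\times}\psi(s+t)\alpha(s)\beta(t)\prod_{i=1}^n {}_0F_1\!\left({-\atop\gamma_i};\lambda_i st\right).$$
   Context: $\mathbb{F}_q$ is a finite field with $q$ elements and characteristic $p$. $\widehat{\mathbb{F}_q^\times}=\mathrm{Hom}(\mathbb{F}_q^\times,\overline{\mathbb{Q}}^\times)$ is the group of multiplicative characters; $\varepsilon$ is the trivial character and $\phi$ the quadratic character (used only when $p\ne2$). Every character $\eta$ (including $\varepsilon$) is extended by $\eta(0)=0$; $\overline{\eta}=\eta^{-1}$; $\delta(\eta)=1$ if $\eta=\varepsilon$ and $0$ otherwise. A non-trivial additive character $\psi$ of $\mathbb{F}_q$ is fixed. Gauss sums: $g(\eta)=-\sum_{x\in\mathbb{F}_q^\times}\psi(x)\eta(x)$ and $g^\circ(\eta)=q^{\delta(\eta)}g(\eta)$. Pochhammer analogues: $(\alpha)_\nu=g(\alpha\nu)/g(\alpha)$, $(\alpha)^\circ_\nu=g^\circ(\alpha\nu)/g^\circ(\alpha)$. For characters $\alpha_1,\dots,\alpha_m,\beta_1,\dots,\beta_n$ and $\lambda\in\mathbb{F}_q$, $${}_mF_n\!\left({\alpha_1,\dots,\alpha_m\atop\beta_1,\dots,\beta_n};\lambda\right)=\frac{1}{1-q}\sum_{\nu\in\widehat{\mathbb{F}_q^\times}}\frac{(\alpha_1)_\nu\cdots(\alpha_m)_\nu}{(\varepsilon)^\circ_\nu(\beta_1)^\circ_\nu\cdots(\beta_n)^\circ_\nu}\nu(\lambda)$$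 (an empty list of parameters is written $-$). Lauricella functions over $\mathbb{F}_q$: for $\lambda_i\in\mathbb{F}_q$, with all sums over $\nu_1,\dots,\nu_n\in\widehat{\mathbb{F}_q^\times}$ and $P=\prod_{i}\frac{\nu_i(\lambda_i)}{(\varepsilon)^\circ_{\nu_i}}$, $F_A^{(n)}\!\left({\alpha;\beta_1,\dots,\beta_n\atop\gamma_1,\dots,\gamma_n};\lambda\right)=\frac{1}{(1-q)^n}\sum\frac{(\alpha)_{\nu_1\cdots\nu_n}\prod_i(\beta_i)_{\nu_i}}{\prod_i(\gamma_i)^\circ_{\nu_i}}P$, $F_B^{(n)}\!\left({\alpha_1,\dots,\alpha_n;\beta_1,\dots,\beta_n\atop\gamma};\lambda\right)=\frac{1}{(1-q)^n}\sum\frac{\prod_i(\alpha_i)_{\nu_i}(\beta_i)_{\nu_i}}{(\gamma)^\circ_{\nu_1\cdots\nu_n}}P$, $F_C^{(n)}\!\left({\alpha;\beta\atop\gamma_1,\dots,\gamma_n};\lambda\right)=\frac{1}{(1-q)^n}\sum\frac{(\alpha)_{\nu_1\cdots\nu_n}(\beta)_{\nu_1\cdots\nu_n}}{\prod_i(\gamma_i)^\circ_{\nu_i}}P$. *)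

From HB Require Import structures.
From mathcomp Require Import all_boot all_order all_algebra all_field.
Set Implicit Arguments. Unset Strict Implicit. Unset Printing Implicit Defensive.
Import Order.TTheory GRing.Theory Num.Theory.
Local Open Scope ring_scope.

Section FqHyp.
Variable F : finFieldType.

(* Nq = q - 1 = #|F| - 1 (written so that it is syntactically a successor). *)
Definition Nq : nat := (#|F|.-2).+1.

Definition wq : algC := sval (C_prim_root_exists (ltn0Sn (#|F|.-2))).

Definition charval (k : {ffun F -> 'I_Nq}) : {ffun F -> algC} :=
  [ffun x => if x == 0 then 0 else wq ^+ k x].

Definition is_mchar (f : {ffun F -> algC}) : bool :=
  [&& f 0 == 0, f 1 == 1 & [forall x, [forall y, f (x * y) == f x * f y]]].

(* The (finite) group of multiplicative characters \hat{F_q^x}: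
   every character takes values in the (q-1)-th roots of unity, hence is of
   the form x |-> wq ^+ k x for a unique exponent map k. *)
Definition mchar := {k : {ffun F -> 'I_Nq} | is_mchar (charval k)}.
Definition mch (nu : mchar) : {ffun F -> algC} := charval (val nu).
Coercion mch : mchar >-> finfun_of.

Definition eps : {ffun F -> algC} := [ffun x => if x == 0 then 0 else 1].
Definition quadchar : {ffun F -> algC} :=
  [ffun x => if x == 0 then 0
             else if [exists y : F, y ^+ 2 == x] then 1 else -1].

Definition cmul (a b : {ffun F -> algC}) : {ffun F -> algC} :=
  [ffun x => a x * b x].
Definition cinv (a : {ffun F -> algC}) : {ffun F -> algC} :=
  [ffun x => (a x)^-1].

Definition qC : algC := (#|F|)%:R.

Variable psi : F -> algC.

Definition gauss (eta : {ffun F -> algC}) : algC :=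
  - \sum_(x : F | x != 0) psi x * eta x.
Definition gaussc (eta : {ffun F -> algC}) : algC :=
  qC ^+ (eta == eps) * gauss eta.

Definition poch (a nu : {ffun F -> algC}) : algC := gauss (cmul a nu) / gauss a.
Definition pochc (a nu : {ffun F -> algC}) : algC := gaussc (cmul a nu) / gaussc a.

Definition hypF (As Bs : seq {ffun F -> algC}) (lam : F) : algC :=
  (1 - qC)^-1 * \sum_(nu : mchar)
    (\prod_(a <- As) poch a nu) /
      (pochc eps nu * \prod_(b <- Bs) pochc b nu) * nu lam.

Definition cprod n (nus : {ffun 'I_n -> mchar}) : {ffun F -> algC} :=
  [ffun x => \prod_(i < n) (nus i : {ffun F -> algC}) x].

Definition lauP n (nus : {ffun 'I_n -> mchar}) (lam : 'I_n -> F) : algC :=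
  \prod_(i < n) ((nus i : {ffun F -> algC}) (lam i) / pochc eps (nus i)).

Definition FA n (al : {ffun F -> algC}) (be ga : 'I_n -> {ffun F -> algC})
    (lam : 'I_n -> F) : algC :=
  (1 - qC)^-n * \sum_(nus : {ffun 'I_n -> mchar})
    poch al (cprod nus) * (\prod_(i < n) poch (be i) (nus i)) /
      (\prod_(i < n) pochc (ga i) (nus i)) * lauP nus lam.

Definition FB n (al be : 'I_n -> {ffun F -> algC}) (ga : {ffun F -> algC})
    (lam : 'I_n -> F) : algC :=
  (1 - qC)^-n * \sum_(nus : {ffun 'I_n -> mchar})
    (\prod_(i < n) (poch (al i) (nus i) * poch (be i) (nus i))) /
      pochc ga (cprod nus) * lauP nus lam.

Definition FC n (al be : {ffun F -> algC}) (ga : 'I_n -> {ffun F -> algC})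
    (lam : 'I_n -> F) : algC :=
  (1 - qC)^-n * \sum_(nus : {ffun 'I_n -> mchar})
    poch al (cprod nus) * poch be (cprod nus) /
      (\prod_(i < n) pochc (ga i) (nus i)) * lauP nus lam.

End FqHyp.

From HB Require Import structures.
From mathcomp Require Import all_boot all_order all_algebra all_field.
From mathcomp Require Import ring.
Import Order.TTheory GRing.Theory Num.Theory.
Local Open Scope ring_scope.
Set Implicit Arguments. Unset Strict Implicit. Unset Printing Implicit Defensive.

(* Every Lauricella function is a normalised sum, over tuples of characters [nu_i],
   of Pochhammer products times [prod_i nu_i(lam_i)].  Expanding each hypergeometric
   factor on the right-hand sides the same way and exchanging the sums, the coefficient
   of a tuple becomes, since [nu (lam t) = nu lam * nu t], a Gauss-type sum of the
   product character [nu_1 ... nu_n] against the weight in [t].  In (i) and (iv) these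
   are the Gauss sums in the numerators of [(alpha)_nu] and [(beta)_nu]; in (ii) the sum
   is evaluated by [g°(chi) * sum_t psi(-t) chi(t)^-1 = -q]; in (iii) it is
   [g(alpha^2 nu^2)], which the duplication formula
   [g(chi) g(chi phi) = chi(4)^-1 g(chi^2) g(phi)], proved with Jacobi sums, turns into
   the product [(alpha)_nu (alpha phi)_nu]. *)

Lemma eq0_of_fixed_scale (R : idomainType) (c s : R) : c != 1 -> s = c * s -> s = 0.
Proof.
move=> c_neq1 s_fixed.
have : (1 - c) * s = 0 by rewrite mulrBl mul1r -s_fixed subrr.
by move/eqP; rewrite mulf_eq0 subr_eq0 eq_sym (negbTE c_neq1) => /eqP.
Qed.

Section MultiplicativeCharacters.
Variable F : finFieldType.
Local Notation cfun := {ffun F -> algC}.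

Lemma cmulE (a b : cfun) x : cmul a b x = a x * b x.
Proof. by rewrite ffunE. Qed.

Lemma cmulC (a b : cfun) : cmul a b = cmul b a.
Proof. by apply/ffunP => x; rewrite !cmulE mulrC. Qed.

Lemma cmulA (a b c : cfun) : cmul a (cmul b c) = cmul (cmul a b) c.
Proof. by apply/ffunP => x; rewrite !cmulE mulrA. Qed.

Lemma cinvE (a : cfun) x : cinv a x = (a x)^-1.
Proof. by rewrite ffunE. Qed.

Lemma cprodE n (nus : {ffun 'I_n -> mchar F}) x :
  cprod nus x = \prod_(i < n) (nus i : cfun) x.
Proof. by rewrite ffunE. Qed.

Lemma epsE x : eps F x = if x == 0 then 0 else 1.
Proof. by rewrite ffunE. Qed.

Lemma cmul_epsl (a : cfun) : a 0 = 0 -> cmul (eps F) a = a.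
Proof.
move=> a0; apply/ffunP => x; rewrite cmulE epsE.
by have [->|x_neq0] := eqVneq x 0; rewrite ?a0 ?mulr0 ?mul1r.
Qed.

Lemma sum_nonzero (f : F -> algC) : f 0 = 0 -> \sum_(x | x != 0) f x = \sum_x f x.
Proof. by move=> f0; rewrite [RHS](bigD1 0) //= f0 add0r. Qed.

Lemma sum_nonzero1 : \sum_(x : F | x != 0) (1 : algC) = qC F - 1.
Proof.
have : \sum_(x : F) (1 : algC) = qC F by rewrite sumr_const cardT -cardE.
by rewrite (bigD1 0) //= => <-; rewrite addrC addrK.
Qed.

Lemma sum_eps : \sum_x eps F x = qC F - 1.
Proof.
rewrite -sum_nonzero ?epsE ?eqxx // -sum_nonzero1.
by apply: eq_bigr => x /negbTE x_neq0; rewrite epsE x_neq0.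
Qed.

Definition jacobi (f1 f2 : cfun) : algC := \sum_u f1 u * f2 (1 - u).

Lemma is_mcharP (f : cfun) :
  reflect [/\ f 0 = 0, f 1 = 1 & forall x y, f (x * y) = f x * f y] (is_mchar f).
Proof.
apply: (iffP and3P) => [[/eqP f0 /eqP f1 /forallP fM]|[f0 f1 fM]].
  by split=> // x y; apply/eqP; have /forallP := fM x; apply.
by split; [apply/eqP | apply/eqP | apply/forallP => x; apply/forallP => y; apply/eqP].
Qed.

Section OneCharacter.
Variable f : cfun.
Hypothesis f_mchar : is_mchar f.

Lemma mchar0 : f 0 = 0. Proof. by case/is_mcharP: f_mchar. Qed.

Lemma mchar1 : f 1 = 1. Proof. by case/is_mcharP: f_mchar. Qed.

Lemma mcharM x y : f (x * y) = f x * f y. Proof. by case/is_mcharP: f_mchar. Qed.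

Lemma mcharMV x : x != 0 -> f x * f x^-1 = 1.
Proof. by move=> x_neq0; rewrite -mcharM mulfV // mchar1. Qed.

Lemma mchar_neq0 x : x != 0 -> f x != 0.
Proof.
move=> x_neq0; apply: contra_eq_neq (mcharMV x_neq0) => ->.
by rewrite mul0r eq_sym oner_eq0.
Qed.

Lemma mcharV x : f x^-1 = (f x)^-1.
Proof.
have [->|x_neq0] := eqVneq x 0; first by rewrite invr0 mchar0 invr0.
by apply: (mulfI (mchar_neq0 x_neq0)); rewrite mcharMV // mulfV // mchar_neq0.
Qed.

Lemma mchar_nontrivial : f != eps F -> exists2 a, a != 0 & f a != 1.
Proof.
move=> f_neq_eps.
have /existsP [a /andP [a_neq0 fa]] : [exists a, (a != 0) && (f a != 1)]; last by exists a.
apply: contraNT f_neq_eps => /existsPn f_triv; apply/eqP/ffunP => x; rewrite epsE.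
case: eqP => [->|/eqP x_neq0]; first exact: mchar0.
by have := f_triv x; rewrite x_neq0 /= negbK => /eqP.
Qed.

Lemma sum_mchar : f != eps F -> \sum_x f x = 0.
Proof.
case/mchar_nontrivial => a a_neq0 fa_neq1; apply: (eq0_of_fixed_scale fa_neq1).
have a_unit : a \is a GRing.unit by rewrite unitfE.
rewrite mulr_sumr [LHS](reindex_inj (mulrI a_unit)) /=.
by apply: eq_bigr => x _; rewrite mcharM.
Qed.

End OneCharacter.

Lemma mch_mchar (nu : mchar F) : is_mchar nu.
Proof. exact: (valP nu). Qed.

Lemma cmul_mchar (a b : cfun) : is_mchar a -> is_mchar b -> is_mchar (cmul a b).
Proof.
move=> a_mchar b_mchar; apply/is_mcharP; split=> [||x y]; rewrite !cmulE.
- by rewrite mchar0 ?mul0r.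
- by rewrite !mchar1 ?mulr1.
- by rewrite !mcharM // mulrACA.
Qed.

Lemma cprod_mchar n (nus : {ffun 'I_n -> mchar F}) : (0 < n)%N -> is_mchar (cprod nus).
Proof.
move=> n_gt0; apply/is_mcharP; split=> [||x y]; rewrite !cprodE.
- by case: n nus n_gt0 => // n nus _; rewrite big_ord_recl mchar0 ?mul0r ?mch_mchar.
- by rewrite big1 // => i _; rewrite mchar1 ?mch_mchar.
- by rewrite -big_split; apply: eq_bigr => i _; rewrite mcharM ?mch_mchar.
Qed.

Section QuadraticCharacter.
Hypothesis two_neq0 : (2 : F) != 0.
Local Notation phi := (quadchar F).

Lemma quadcharE x :
  phi x = if x == 0 then 0 else if [exists y, y ^+ 2 == x] then 1 else -1.
Proof. by rewrite ffunE. Qed.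

Lemma quadchar0 : phi 0 = 0.
Proof. by rewrite quadcharE eqxx. Qed.

Lemma quadchar_cases x : [\/ phi x = 0, phi x = 1 | phi x = -1].
Proof.
rewrite quadcharE; case: ifP => _; first by constructor 1.
by case: ifP => _; [constructor 2 | constructor 3].
Qed.

Lemma quadchar_neq0 x : x != 0 -> phi x != 0.
Proof.
move=> x_neq0; rewrite quadcharE (negbTE x_neq0).
by case: ifP; rewrite ?oppr_eq0 oner_eq0.
Qed.

Lemma quadchar_sqr w : w != 0 -> phi (w ^+ 2) = 1.
Proof.
move=> w_neq0; rewrite quadcharE expf_eq0 /= (negbTE w_neq0).
by case: existsP => // [[]]; exists w.
Qed.

Lemma quadchar_sqrM w y : w != 0 -> phi (w ^+ 2 * y) = phi y.
Proof.
move=> w_neq0; rewrite !quadcharE mulf_eq0 expf_eq0 /= (negbTE w_neq0) /=.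
case: eqP => // _; congr (if _ then _ else _).
apply/existsP/existsP => [[v /eqP v2]|[v /eqP v2]].
  by exists (v / w); rewrite expr_div_n v2 mulrC mulKf // expf_neq0.
by exists (w * v); rewrite exprMn v2.
Qed.

Lemma quadchar_eq1 x : phi x = 1 -> exists2 w, w != 0 & x = w ^+ 2.
Proof.
rewrite quadcharE; case: eqP => [_ /eqP|/eqP x_neq0]; first by rewrite eq_sym oner_eq0.
case: existsP => [[w /eqP w2x] _|_ /eqP]; last by rewrite eqNr oner_eq0.
by exists w => //; apply: contraNneq x_neq0 => w0; rewrite -w2x w0 expr0n.
Qed.

Definition nsqrt (y : F) : nat := #|[pred w : F | w ^+ 2 == y]|.

Lemma nsqrtE y : (nsqrt y)%:R = 1 + phi y.
Proof.
rewrite quadcharE /nsqrt; have [->|y_neq0] := eqVneq y 0.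
  rewrite addr0 (@eq_card _ _ (pred1 0)) ?card1 // => w /=.
  by rewrite inE expf_eq0.
case: existsP => [[w0 /eqP w0y]|no_sqrt]; last first.
  rewrite (eq_card0 (A := [pred w | w ^+ 2 == y])) ?subrr // => w /=.
  by apply/negP => /eqP w2y; apply: no_sqrt; exists w; rewrite w2y.
rewrite (@eq_card _ _ (pred2 w0 (- w0))) ?card2; last first.
  by move=> w; rewrite inE /= -w0y eqf_sqr.
have w0_neq0 : w0 != 0 by apply: contraNneq y_neq0 => w00; rewrite -w0y w00 expr0n.
suff -> : w0 != - w0 by [].
apply/eqP => w0N; have : 2 * w0 = 0 by rewrite mulr_natl mulr2n {2}w0N subrr.
by move/eqP; rewrite mulf_eq0 (negbTE two_neq0) (negbTE w0_neq0).
Qed.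

Lemma sum_nsqrt (g : F -> algC) : \sum_x g x * (nsqrt x)%:R = \sum_w g (w ^+ 2).
Proof.
have nsqrt_sum x : (nsqrt x)%:R = \sum_(w | w ^+ 2 == x) (1 : algC).
  by rewrite sumr_const.
under eq_bigr do rewrite nsqrt_sum mulr_sumr mulr1 big_mkcond /=.
rewrite exchange_big /=; apply: eq_bigr => w _.
by rewrite -big_mkcond /= (big_pred1 (w ^+ 2)) // => x; rewrite inE /= eq_sym.
Qed.

Lemma sum_quadchar : \sum_x phi x = 0.
Proof.
have := sum_nsqrt (fun _ => 1); under eq_bigr do rewrite mul1r nsqrtE.
by rewrite big_split /= => /eqP; rewrite -subr_eq0 addrAC subrr add0r => /eqP.
Qed.

Lemma quadcharM_nonsquare a y : phi a = -1 -> phi y != -1 -> phi (a * y) = - phi y.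
Proof.
move=> phi_a; case: (quadchar_cases y) => phi_y; rewrite phi_y ?eqxx // => _.
  have [->|y_neq0] := eqVneq y 0; first by rewrite mulr0 quadchar0 oppr0.
  by move: (quadchar_neq0 y_neq0); rewrite phi_y eqxx.
by case: (quadchar_eq1 phi_y) => w w_neq0 ->; rewrite mulrC quadchar_sqrM.
Qed.

(* [y |-> a * y] permutes [F] and negates [phi] off the nonsquares; as [phi] sums to
   zero, the values [phi (a * y) <= 1] over the nonsquares [y] must all be [1]. *)
Lemma quadcharM_nonsquares a b : phi a = -1 -> phi b = -1 -> phi (a * b) = 1.
Proof.
move=> phi_a phi_b.
have a_unit : a \is a GRing.unit.
  rewrite unitfE; apply: contra_eq_neq phi_a => ->.
  by rewrite quadchar0 eq_sym oppr_eq0 oner_eq0.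
have split_sum (f : F -> algC) :
    \sum_y f y = \sum_(y | phi y == -1) f y + \sum_(y | phi y != -1) f y.
  exact: bigID.
have sum_aM : \sum_(y | phi y == -1) phi (a * y) = \sum_(y | phi y != -1) phi y.
  have : \sum_y phi (a * y) = 0.
    by rewrite -[RHS]sum_quadchar [RHS](reindex_inj (mulrI a_unit)).
  rewrite split_sum [X in _ + X](eq_bigr (fun y => - phi y)) => [|y]; last first.
    exact: quadcharM_nonsquare.
  by rewrite sumrN => /eqP; rewrite subr_eq0 => /eqP.
have sum_squares : \sum_(y | phi y != -1) phi y = \sum_(y | phi y == -1) 1.
  move: sum_quadchar; rewrite split_sum (eq_bigr (fun y => -1)) => [|y /eqP //].
  by rewrite sumrN addrC => /eqP; rewrite subr_eq0 => /eqP.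
have : \sum_(y | phi y == -1) (1 - phi (a * y)) = 0.
  by rewrite sumrB sum_aM sum_squares subrr.
have nonneg y : phi y == -1 -> 0 <= 1 - phi (a * y).
  move=> _; case: (quadchar_cases (a * y)) => ->; rewrite ?subr0 ?subrr ?ler01 //.
  by rewrite opprK -[_ + _]/(2%:R) ler0n.
move/(psumr_eq0P nonneg)/(_ b); rewrite phi_b eqxx => /(_ isT) /eqP.
by rewrite subr_eq0 eq_sym => /eqP.
Qed.

Lemma quadcharM x y : phi (x * y) = phi x * phi y.
Proof.
have [->|x_neq0] := eqVneq x 0; first by rewrite mul0r quadchar0 mul0r.
have [->|y_neq0] := eqVneq y 0; first by rewrite mulr0 quadchar0 mulr0.
case: (quadchar_cases x) => phi_x.
- by move: (quadchar_neq0 x_neq0); rewrite phi_x eqxx.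
- case: (quadchar_eq1 phi_x) => w w_neq0 ->.
  by rewrite quadchar_sqrM // quadchar_sqr // mul1r.
case: (quadchar_cases y) => phi_y.
- by move: (quadchar_neq0 y_neq0); rewrite phi_y eqxx.
- case: (quadchar_eq1 phi_y) => w w_neq0 ->.
  by rewrite mulrC quadchar_sqrM // quadchar_sqr // mulr1.
by rewrite quadcharM_nonsquares // phi_x phi_y mulrNN mulr1.
Qed.

Lemma quadchar_mchar : is_mchar phi.
Proof.
apply/is_mcharP; split; [exact: quadchar0 | | exact: quadcharM].
by rewrite -(expr1n _ 2) quadchar_sqr ?oner_eq0.
Qed.

Lemma cmul_quadchar : cmul phi phi = eps F.
Proof.
apply/ffunP => x; rewrite cmulE epsE.
have [->|x_neq0] := eqVneq x 0; first by rewrite quadchar0 mulr0.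
move: (quadchar_neq0 x_neq0).
by case: (quadchar_cases x) => ->; rewrite ?eqxx ?mulrNN ?mulr1.
Qed.

Lemma mchar_sqr_eps (c : cfun) :
  is_mchar c -> cmul c c = eps F -> c != eps F -> c = phi.
Proof.
move=> c_mchar c_sqr c_neq_eps.
have c_sqr1 w : w != 0 -> c (w ^+ 2) = 1.
  by move=> w_neq0; rewrite expr2 mcharM // -cmulE c_sqr epsE (negbTE w_neq0).
case: (mchar_nontrivial c_mchar c_neq_eps) => a a_neq0 ca_neq1.
have ca : c a = -1.
  have : c a ^+ 2 == 1 by rewrite expr2 -cmulE c_sqr epsE (negbTE a_neq0).
  by rewrite sqrf_eq1 (negbTE ca_neq1) => /eqP.
have phi_a : phi a = -1.
  case: (quadchar_cases a) => // phi_a.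
    by move: (quadchar_neq0 a_neq0); rewrite phi_a eqxx.
  by case: (quadchar_eq1 phi_a) => w w_neq0 aw; move: ca_neq1; rewrite aw c_sqr1 ?eqxx.
apply/ffunP => x; have [->|x_neq0] := eqVneq x 0; first by rewrite mchar0 // quadchar0.
case: (quadchar_cases x) => phi_x.
- by move: (quadchar_neq0 x_neq0); rewrite phi_x eqxx.
- by case: (quadchar_eq1 phi_x) => w w_neq0 xw; rewrite phi_x xw c_sqr1.
rewrite phi_x; case: (quadchar_eq1 (quadcharM_nonsquares phi_a phi_x)) => v v_neq0.
move=> /(congr1 c); rewrite mcharM // ca c_sqr1 // => /eqP.
by rewrite mulN1r eq_sym -eqr_oppLR => /eqP <-.
Qed.

Lemma four_neq0 : (4 : F) != 0.
Proof. by rewrite -[4%:R]/((2 * 2)%:R) natrM mulf_neq0. Qed.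

(* The substitution [u = (1 + w) / 2] turns [u (1 - u)] into [(1 - w ^+ 2) / 4]. *)
Lemma jacobi_self (c : cfun) : is_mchar c ->
  jacobi c c = (c 4)^-1 * (\sum_y c y + jacobi phi c).
Proof.
move=> c_mchar; rewrite /jacobi.
have half_inj : injective (fun w : F => (1 + w) / 2).
  by move=> w1 w2 /(mulIf (invr_neq0 two_neq0)) /addrI.
rewrite (reindex_inj half_inj) /= (eq_bigr (fun w => (c 4)^-1 * c (1 - w ^+ 2))).
  rewrite -mulr_sumr -(sum_nsqrt (fun y => c (1 - y))); congr (_ * _).
  rewrite (eq_bigr (fun x => c (1 - x) + phi x * c (1 - x))) => [|x _]; last first.
    by rewrite nsqrtE mulrDr mulr1 mulrC.
  rewrite big_split /=; congr (_ + _).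
  have one_sub_inj : injective (fun y : F => 1 - y) by move=> y1 y2 /addrI /oppr_inj.
  by rewrite (reindex_inj one_sub_inj) /=; apply: eq_bigr => y _; rewrite subKr.
move=> w _; rewrite -mcharM // -mcharV // -mcharM // mulrC; congr (c _).
by field; rewrite four_neq0 two_neq0.
Qed.

End QuadraticCharacter.

End MultiplicativeCharacters.

Section AdditiveCharacter.
Variables (F : finFieldType) (psi : F -> algC).
Hypothesis psiD : forall x y : F, psi (x + y) = psi x * psi y.
Hypothesis psi0 : psi 0 = 1.
Hypothesis psi_nontriv : exists x : F, psi x != 1.
Local Notation cfun := {ffun F -> algC}.

Lemma sum_psi : \sum_x psi x = 0.
Proof.
case: psi_nontriv => a psia_neq1; apply: (eq0_of_fixed_scale psia_neq1).
rewrite mulr_sumr [LHS](reindex_inj (addrI a)) /=.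
by apply: eq_bigr => x _; rewrite psiD.
Qed.

Lemma sum_psi_nonzero : \sum_(x | x != 0) psi x = -1.
Proof.
have := sum_psi; rewrite (bigD1 0) //= psi0 => /eqP.
by rewrite addrC addr_eq0 => /eqP.
Qed.

Lemma sum_psiM (c : F) :
  \sum_(t | t != 0) psi (t * c) = if c == 0 then qC F - 1 else -1.
Proof.
have [->|c_neq0] := eqVneq c 0.
  by under eq_bigr do rewrite mulr0 psi0; rewrite sum_nonzero1.
rewrite -sum_psi_nonzero [RHS](reindex_inj (mulIf c_neq0)) /=.
by apply: eq_bigl => x; rewrite mulf_eq0 (negbTE c_neq0) orbF.
Qed.

Lemma gaussE (f : cfun) : f 0 = 0 -> gauss psi f = - \sum_x psi x * f x.
Proof. by move=> f0; rewrite /gauss sum_nonzero // f0 mulr0. Qed.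

Lemma gauss_eps : gauss psi (eps F) = 1.
Proof.
rewrite /gauss -[RHS]opprK -sum_psi_nonzero; congr (- _).
by apply: eq_bigr => x /negbTE x_neq0; rewrite epsE x_neq0 mulr1.
Qed.

Lemma gaussc_eps : gaussc psi (eps F) = qC F.
Proof. by rewrite /gaussc eqxx gauss_eps mulr1. Qed.

Lemma gaussc_neq_eps (f : cfun) : f != eps F -> gaussc psi f = gauss psi f.
Proof. by move/negbTE => f_neq_eps; rewrite /gaussc f_neq_eps mul1r. Qed.

Lemma sum_psi_cmul (a b : cfun) :
  \sum_(t | t != 0) psi t * a t * b t = - gauss psi (cmul a b).
Proof. by rewrite opprK; apply: eq_bigr => t _; rewrite cmulE mulrA. Qed.

Lemma gaussc_mul_conj (f : cfun) : is_mchar f ->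
  gaussc psi f * \sum_(t | t != 0) psi (- t) * (f t)^-1 = - qC F.
Proof.
move=> f_mchar; have [->|f_neq_eps] := eqVneq f (eps F).
  rewrite gaussc_eps (eq_bigr (fun t => psi (- t))) => [|t t_neq0]; last first.
    by rewrite epsE (negbTE t_neq0) invr1 mulr1.
  rewrite [X in _ * X](reindex_inj (@oppr_inj F)) /=.
  under eq_bigl do rewrite oppr_eq0.
  by under eq_bigr do rewrite opprK; rewrite sum_psi_nonzero mulrN1.
(* put [x = u * t] *)
have substitute : \sum_(x | x != 0) \sum_(t | t != 0) psi x * f x * (psi (- t) * (f t)^-1)
    = \sum_(u | u != 0) f u * \sum_(t | t != 0) psi (t * (u - 1)).
  under [RHS]eq_bigr do rewrite mulr_sumr.
  rewrite exchange_big [RHS]exchange_big /=; apply: eq_bigr => t t_neq0.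
  rewrite (reindex_inj (mulIf t_neq0)) /=.
  apply: eq_big => [u|u u_neq0]; first by rewrite mulf_eq0 (negbTE t_neq0) orbF.
  rewrite mcharM // mulrACA -psiD -mulrA mulfV ?mchar_neq0 // mulr1 mulrC.
  by rewrite mulrBr mulr1 [t * u]mulrC.
rewrite gaussc_neq_eps // /gauss mulNr mulr_suml.
under eq_bigr do rewrite mulr_sumr.
rewrite substitute; under eq_bigr do rewrite sum_psiM subr_eq0.
rewrite (bigD1 1) ?oner_eq0 //= eqxx mchar1 // mul1r.
rewrite (eq_bigr (fun u => - f u)) => [|u /andP [_ /negbTE ->]]; last by rewrite mulrN1.
have := sum_mchar f_mchar f_neq_eps; rewrite -sum_nonzero ?mchar0 //.
rewrite (bigD1 1) ?oner_eq0 //= mchar1 // sumrN => /eqP.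
by rewrite addrC addr_eq0 => /eqP ->; rewrite opprK subrK.
Qed.

Lemma gaussc_neq0 (f : cfun) : is_mchar f -> gaussc psi f != 0.
Proof.
move=> f_mchar; apply: contra_eq_neq (gaussc_mul_conj f_mchar) => ->.
by rewrite mul0r eq_sym oppr_eq0 pnatr_eq0 -lt0n; apply/card_gt0P; exists 0.
Qed.

Lemma gauss_neq0 (f : cfun) : is_mchar f -> gauss psi f != 0.
Proof. by move/gaussc_neq0; apply: contraNneq; rewrite /gaussc => ->; rewrite mulr0. Qed.

Lemma sum_psiN_mcharV (f : cfun) : is_mchar f ->
  \sum_(t | t != 0) psi (- t) * (f t)^-1 = - qC F / gaussc psi f.
Proof.
move=> f_mchar; rewrite -(gaussc_mul_conj f_mchar) [gaussc psi f * _]mulrC.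
by rewrite mulfK // gaussc_neq0.
Qed.

Lemma prod_pochc_neq0 n (ga : 'I_n -> mchar F) (nus : {ffun 'I_n -> mchar F}) :
  \prod_(i < n) pochc psi (ga i) (nus i) != 0.
Proof.
apply/prodf_neq0 => i _.
by rewrite mulf_neq0 ?invr_neq0 ?gaussc_neq0 ?cmul_mchar ?mch_mchar.
Qed.

Lemma gauss_mul_jacobi (c1 c2 : cfun) : is_mchar c1 -> is_mchar c2 ->
  gauss psi c1 * gauss psi c2
  = - gauss psi (cmul c1 c2) * jacobi c1 c2 + c2 (-1) * \sum_x cmul c1 c2 x.
Proof.
move=> c1_mchar c2_mchar.
rewrite !gaussE ?mchar0 ?cmul_mchar // mulrNN opprK big_distrlr /=.
rewrite (eq_bigr (fun x => \sum_z psi z * (c1 x * c2 (z - x)))) => [|x _]; last first.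
  rewrite (reindex_inj (addIr (- x))) /=; apply: eq_bigr => z _.
  have -> : psi z = psi x * psi (z - x) by rewrite -psiD addrC subrK.
  ring.
rewrite exchange_big /=; under eq_bigr do rewrite -mulr_sumr.
rewrite (bigD1 0) //= psi0 mul1r addrC; congr (_ + _).
  rewrite /jacobi mulr_suml -[RHS]sum_nonzero; last first.
    by rewrite cmulE (mchar0 c1_mchar) mul0r mulr0 mul0r.
  apply: eq_bigr => z z_neq0; rewrite -mulrA; congr (_ * _); rewrite mulr_sumr.
  rewrite (reindex_inj (mulrI (_ : z \is a GRing.unit))) ?unitfE //=.
  apply: eq_bigr => u _; rewrite -{2}[z]mulr1 -mulrBr.
  by rewrite !mcharM // cmulE; ring.
rewrite mulr_sumr; apply: eq_bigr => x _.
by rewrite sub0r -[- x]mulN1r mcharM // cmulE; ring.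
Qed.

Definition hypF_coef (As Bs : seq cfun) (nu : mchar F) : algC :=
  (\prod_(a <- As) poch psi a nu) /
    (pochc psi (eps F) nu * \prod_(b <- Bs) pochc psi b nu).

Lemma prod_hypF_coef n (As Bs : 'I_n -> seq cfun) (nus : {ffun 'I_n -> mchar F})
    (lam : 'I_n -> F) :
  \prod_(i < n) (hypF_coef (As i) (Bs i) (nus i) * (nus i : cfun) (lam i))
  = (\prod_(i < n) \prod_(a <- As i) poch psi a (nus i)) /
      (\prod_(i < n) \prod_(b <- Bs i) pochc psi b (nus i)) * lauP psi nus lam.
Proof.
rewrite /lauP -prodfV -!big_split /=; apply: eq_bigr => i _.
by rewrite /hypF_coef invfM; ring.
Qed.

Lemma prod_mcharM n (nus : {ffun 'I_n -> mchar F}) (c : 'I_n -> algC)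
    (l : 'I_n -> F) (y : F) :
  \prod_(i < n) (c i * (nus i : cfun) (l i * y))
  = \prod_(i < n) (c i * (nus i : cfun) (l i)) * cprod nus y.
Proof.
rewrite cprodE -big_split /=; apply: eq_bigr => i _.
by rewrite mcharM ?mch_mchar // mulrA.
Qed.

Lemma hypF_expansion (I : finType) (P : pred I) n (As Bs : 'I_n -> seq cfun)
    (lam : 'I_n -> F) (w : I -> algC) (g : I -> F) (h : 'I_n -> I -> F)
    (c : algC) (T : {ffun 'I_n -> mchar F} -> algC) :
  (forall i x, h i x = lam i * g x) ->
  (forall nus, c * T nus =
     (\prod_(i < n) \prod_(a <- As i) poch psi a (nus i)) /
       (\prod_(i < n) \prod_(b <- Bs i) pochc psi b (nus i)) * lauP psi nus lam
     * \sum_(x | P x) w x * cprod nus (g x)) ->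
  c * ((1 - qC F) ^- n * \sum_nus T nus)
  = \sum_(x | P x) w x * \prod_(i < n) hypF psi (As i) (Bs i) (h i x).
Proof.
move=> h_lam termwise; under [RHS]eq_bigr => x _ do rewrite /hypF big_split /=
  prodr_const card_ord exprVn bigA_distr_bigA /= mulrCA mulr_sumr.
rewrite -mulr_sumr exchange_big mulrCA mulr_sumr /=; congr (_ * _).
apply: eq_bigr => nus _; rewrite termwise mulr_sumr; apply: eq_bigr => x _.
rewrite [in RHS](eq_bigr (fun i =>
  hypF_coef (As i) (Bs i) (nus i) * mch (nus i) (lam i * g x))) => [|i _]; last first.
  by rewrite h_lam.
by rewrite prod_mcharM prod_hypF_coef; ring.
Qed.

Lemma gauss_FA n (alpha : mchar F) (be ga : 'I_n -> mchar F) (lam : 'I_n -> F) :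
  - gauss psi alpha * FA psi alpha (fun i => be i : cfun) (fun i => ga i : cfun) lam
  = \sum_(t | t != 0) psi t * (alpha : cfun) t
      * \prod_(i < n) hypF psi [:: (be i : cfun)] [:: (ga i : cfun)] (lam i * t).
Proof.
apply: (hypF_expansion (g := id)) => // nus.
under [X in _ = X / _ * _ * _]eq_bigr do rewrite big_seq1.
under [X in _ = _ / X * _ * _]eq_bigr do rewrite big_seq1.
rewrite sum_psi_cmul /poch; field.
by rewrite prod_pochc_neq0 gauss_neq0 ?mch_mchar.
Qed.

Lemma gaussc_FB n (n_gt0 : (0 < n)%N) (gamma : mchar F) (al be : 'I_n -> mchar F)
    (lam : 'I_n -> F) :
  - (qC F / gaussc psi gamma)
    * FB psi (fun i => al i : cfun) (fun i => be i : cfun) gamma lam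
  = \sum_(t | t != 0) psi (- t) * cinv (gamma : cfun) t
      * \prod_(i < n) hypF psi [:: (al i : cfun); (be i : cfun)] [::] (lam i / t).
Proof.
apply: (hypF_expansion (g := GRing.inv)) => // nus.
under [X in _ = X / _ * _ * _]eq_bigr do rewrite big_cons big_seq1.
under [X in _ = _ / X * _ * _]eq_bigr do rewrite big_nil.
have gammaC_mchar := cmul_mchar (mch_mchar gamma) (cprod_mchar nus n_gt0).
rewrite big1_eq divr1.
under [X in _ = _ * X]eq_bigr do
  rewrite (mcharV (cprod_mchar nus n_gt0)) cinvE -mulrA -invfM -cmulE.
rewrite sum_psiN_mcharV // /pochc; field.
by rewrite !gaussc_neq0 ?mch_mchar.
Qed.

Lemma gauss_gauss_FC n (n_gt0 : (0 < n)%N) (alpha beta : mchar F) (ga : 'I_n -> mchar F)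
    (lam : 'I_n -> F) :
  gauss psi alpha * gauss psi beta * FC psi alpha beta (fun i => ga i : cfun) lam
  = \sum_(s | s != 0) \sum_(t | t != 0) psi (s + t) * (alpha : cfun) s * (beta : cfun) t
      * \prod_(i < n) hypF psi [::] [:: (ga i : cfun)] (lam i * s * t).
Proof.
rewrite pair_big /=.
apply: (hypF_expansion (g := fun p => p.1 * p.2)) => [i p|nus]; first by rewrite mulrA.
under [X in _ = X / _ * _ * _]eq_bigr do rewrite big_nil.
under [X in _ = _ / X * _ * _]eq_bigr do rewrite big_seq1.
have -> : \sum_(p | (p.1 != 0) && (p.2 != 0))
      psi (p.1 + p.2) * (alpha : cfun) p.1 * (beta : cfun) p.2 * cprod nus (p.1 * p.2)
    = (\sum_(s | s != 0) psi s * (alpha : cfun) s * cprod nus s)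
      * (\sum_(t | t != 0) psi t * (beta : cfun) t * cprod nus t).
  rewrite big_distrlr pair_big /=; apply: eq_bigr => p _.
  by rewrite psiD mcharM ?cprod_mchar //; ring.
rewrite big1_eq !sum_psi_cmul /poch; field.
by rewrite prod_pochc_neq0 !gauss_neq0 ?mch_mchar.
Qed.

Section Duplication.
Hypothesis two_neq0 : (2 : F) != 0.
Local Notation phi := (quadchar F).

(* The terms of [gauss_mul_jacobi] for [(c, c)] and [(phi, c)] that are not Jacobi
   sums; all three sums vanish unless [c] is [eps] or [phi]. *)
Lemma gauss_duplication_degenerate (c : cfun) : is_mchar c ->
  gauss psi (cmul c phi)
    * (c (-1) * \sum_x cmul c c x - (c 4)^-1 * gauss psi (cmul c c) * \sum_x c x)
  = (c 4)^-1 * gauss psi (cmul c c) * c (-1) * \sum_x cmul c phi x.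
Proof.
move=> c_mchar; have phi_mchar := quadchar_mchar two_neq0.
have [->|c_neq_eps] := eqVneq c (eps F).
  rewrite !cmul_epsl ?quadchar0 ?epsE ?eqxx // oppr_eq0 oner_eq0.
  rewrite (negbTE (four_neq0 two_neq0)) invr1 gauss_eps.
  by rewrite sum_eps (sum_quadchar two_neq0); ring.
have sum_c := sum_mchar c_mchar c_neq_eps.
have [c_phi|c_neq_phi] := eqVneq c phi.
  have phi4 : phi 4 = 1.
    by rewrite -[4%:R]/((2 * 2)%:R) natrM -expr2 quadchar_sqr.
  by rewrite c_phi cmul_quadchar phi4 invr1 gauss_eps sum_eps -c_phi sum_c; ring.
have sum_c2 : \sum_x cmul c c x = 0.
  apply: sum_mchar; first exact: cmul_mchar.
  by apply: contra_neq c_neq_phi => /(mchar_sqr_eps two_neq0); apply.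
have sum_c_phi : \sum_x cmul c phi x = 0.
  apply: sum_mchar; first exact: cmul_mchar.
  apply: contra_neq c_neq_phi => c_phi_eps.
  rewrite -(cmul_epsl (mchar0 c_mchar)) -cmul_quadchar // -cmulA (cmulC phi c) c_phi_eps.
  by rewrite cmulC cmul_epsl // quadchar0.
by rewrite sum_c sum_c2 sum_c_phi; ring.
Qed.

(* Hasse-Davenport for [m = 2]: multiply by [gauss c], expand both sides with
   [gauss_mul_jacobi] and compare the Jacobi sums through [jacobi_self]. *)
Lemma gauss_duplication (c : cfun) : is_mchar c ->
  gauss psi c * gauss psi (cmul c phi) = (c 4)^-1 * gauss psi (cmul c c) * gauss psi phi.
Proof.
move=> c_mchar; have phi_mchar := quadchar_mchar two_neq0.
apply: (mulfI (gauss_neq0 c_mchar)).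
rewrite mulrA gauss_mul_jacobi // [RHS]mulrC -[_ * gauss psi phi * _]mulrA.
rewrite gauss_mul_jacobi // (cmulC phi c).
rewrite jacobi_self //.
move: (gauss_duplication_degenerate c_mchar).
set A := gauss psi (cmul c phi); set B := gauss psi (cmul c c); set i4 := (c 4)^-1.
move=> degenerate.
transitivity (A * (c (-1) * \sum_x cmul c c x - i4 * B * \sum_x c x)
              - i4 * B * A * jacobi phi c).
  by ring.
by rewrite degenerate; ring.
Qed.

Lemma gauss_FC_quadratic n (n_gt0 : (0 < n)%N) (alpha : mchar F) (be : 'I_n -> mchar F)
    (lam : 'I_n -> F) :
  - gauss psi (cmul alpha alpha) * FC psi alpha (cmul alpha phi) (fun i => be i : cfun) lam
  = \sum_(t | t != 0) psi t * cmul alpha alpha t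
      * \prod_(i < n) hypF psi [::] [:: (be i : cfun)] (lam i * t ^+ 2 / 4).
Proof.
apply: (hypF_expansion (lam := lam) (g := fun t => t ^+ 2 / 4)) => [i t|nus].
  by rewrite [RHS]mulrA.
under [X in _ = X / _ * _ * _]eq_bigr do rewrite big_nil.
under [X in _ = _ / X * _ * _]eq_bigr do rewrite big_seq1.
have C_mchar := cprod_mchar nus n_gt0; set C := cprod nus in C_mchar *.
have alpha_mchar := mch_mchar alpha; have phi_mchar := quadchar_mchar two_neq0.
have -> : \sum_(t | t != 0) psi t * cmul alpha alpha t * C (t ^+ 2 / 4)
    = (C 4)^-1 * - gauss psi (cmul (cmul alpha C) (cmul alpha C)).
  rewrite -sum_psi_cmul mulr_sumr; apply: eq_bigr => t _.
  by rewrite mcharM // mcharV // expr2 mcharM // !cmulE; ring.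
rewrite big1_eq /poch.
have -> : cmul (cmul alpha phi) C = cmul (cmul alpha C) phi by rewrite -!cmulA (cmulC phi).
rewrite mulf_div !gauss_duplication ?cmul_mchar // cmulE.
field.
by rewrite !mchar_neq0 ?four_neq0 ?prod_pochc_neq0 ?gauss_neq0 ?cmul_mchar.
Qed.

End Duplication.

End AdditiveCharacter.

Theorem theorem3p1 (F : finFieldType) (psi : F -> algC)
  (psi_add : forall x y : F, psi (x + y) = psi x * psi y)
  (psi0 : psi 0 = 1) (psi_nontriv : exists x : F, psi x != 1)
  (n : nat) (n_gt0 : (0 < n)%N)
  (alpha beta gamma : mchar F) (al be ga : 'I_n -> mchar F) :
  [/\ (* (i) *)
      forall lam : 'I_n -> F,
        - gauss psi (alpha : {ffun F -> algC})
          * FA psi (alpha : {ffun F -> algC})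
               (fun i => (be i : {ffun F -> algC}))
               (fun i => (ga i : {ffun F -> algC})) lam
        = \sum_(t : F | t != 0) psi t * (alpha : {ffun F -> algC}) t
            * \prod_(i < n) hypF psi [:: (be i : {ffun F -> algC})]
                                     [:: (ga i : {ffun F -> algC})] (lam i * t),
      (* (ii) *)
      forall lam : 'I_n -> F,
        - (qC F / gaussc psi (gamma : {ffun F -> algC}))
          * FB psi (fun i => (al i : {ffun F -> algC}))
               (fun i => (be i : {ffun F -> algC}))
               (gamma : {ffun F -> algC}) lam
        = \sum_(t : F | t != 0) psi (- t) * cinv (gamma : {ffun F -> algC}) t
            * \prod_(i < n) hypF psi [:: (al i : {ffun F -> algC});
                                         (be i : {ffun F -> algC})]
                                     [::] (lam i / t),
      (* (iii) *)
      (2 \notin [pchar F])%N ->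
      forall lam : 'I_n -> F,
        - gauss psi (cmul (alpha : {ffun F -> algC}) alpha)
          * FC psi (alpha : {ffun F -> algC})
               (cmul (alpha : {ffun F -> algC}) (quadchar F))
               (fun i => (be i : {ffun F -> algC})) lam
        = \sum_(t : F | t != 0) psi t * cmul (alpha : {ffun F -> algC}) alpha t
            * \prod_(i < n) hypF psi [::] [:: (be i : {ffun F -> algC})]
                                     (lam i * t ^+ 2 / 4)
    & (* (iv) *)
      forall lam : 'I_n -> F,
        gauss psi (alpha : {ffun F -> algC}) * gauss psi (beta : {ffun F -> algC})
          * FC psi (alpha : {ffun F -> algC}) (beta : {ffun F -> algC})
               (fun i => (ga i : {ffun F -> algC})) lam
        = \sum_(s : F | s != 0) \sum_(t : F | t != 0)
            psi (s + t) * (alpha : {ffun F -> algC}) s * (beta : {ffun F -> algC}) t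
            * \prod_(i < n) hypF psi [::] [:: (ga i : {ffun F -> algC})]
                                     (lam i * s * t)].
Proof.
split=> [lam | lam | two_notin_pchar lam | lam].
- exact: gauss_FA.
- exact: gaussc_FB.
- have two_neq0 : (2 : F) != 0.
    by apply: contra two_notin_pchar => two_eq0; rewrite inE.
  exact: gauss_FC_quadratic.
- exact: gauss_gauss_FC.
Qed.
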